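(* For every $n\ge1$ and every $\pi\in S_n$, $\pi$ is $321$-avoiding if and only if $\Phi_4(\pi)$ is a parallelogram polyomino.
   Context: Cells are unit squares $[i,i+1]\times[j,j+1]$ with integer $i,j$; a polyomino is a finite edge-connected set of cells, up to translation. A directed polyomino has a distinguished cell (the source) such that every cell can be reached from the source by a path of cells moving only North or East inside the polyomino. It is column-convex if each column is connected. The (directed) height is the number of distinct diagonal lines $x+y=\text{const}$ passing through centers of its cells. A deco polyomino is a directed column-convex polyomino whose height is attained only in its last (rightmost) column; $D_n$ denotes those of height $n$. Every deco polyomino of height $n$ is built uniquely by $n$ steps from the empty polyomino; at step $j$ one performs either an elevation (add a cell at the bottom of the leftmost column; step 1 is always an elevation) or a column pasting (add a new column of $k$ cells, $1\le k\le j-1$, to the left of the current polyomino so that the bottoms of the first two columns lie at the same level). The bijection $\Phi_4:S_n\to D_n$ is defined through its inverse, recursively: the height-1 polyomino maps to the permutation $1$; if $\delta\in D_n$ arises from $\delta'\in D_{n-1}$ and $\Phi_4^{-1}(\delta')=\pi_1\cdots\pi_{n-1}$, then $\Phi_4^{-1}(\delta)=\pi_1\cdots\pi_{n-1}\,n$ if the last step is an elevation, and $\Phi_4^{-1}(\delta)=\pi_1\cdots\pi_{n-1-k}\,n\,\pi_{n-k}\cdots\pi_{n-1}$ if the last step pastes a column of length $k$. A permutation is $321$-avoiding if there are no indices $i<j<k$ with $\pi_i>\pi_j>\pi_k$. A parallelogram polyomino is a polyomino bounded by two lattice paths with steps $(1,0)$ and $(0,1)$ which intersect only at their common origin and common endpoint.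 *)

From mathcomp Require Import all_boot all_order all_algebra.
Set Implicit Arguments. Unset Strict Implicit. Unset Printing Implicit Defensive.
Import Order.TTheory GRing.Theory Num.Theory.

(* A cell [i,i+1]x[j,j+1] is represented by its lower-left corner (i,j). *)
Definition cell := (int * int)%type.

(* A deco polyomino is stored as its list of columns, leftmost first; column
   number x (0-based in the list) occupies the cells (x, y) with
   bottom <= y < bottom + length.  Polyominoes are considered up to
   translation; all predicates below are translation invariant. *)
Definition column := (int * nat)%type.

Definition elevation (cs : seq column) : seq column :=
  match cs with
  | [::] => [:: (0%R, 1%N)]
  | (b, l) :: cs' => (b - 1, l.+1)%R :: cs'
  end.

Definition pasting (k : nat) (cs : seq column) : seq column :=
  match cs with
  | [::] => [:: (0%R, k)]
  | (b, l) :: _ => (b, k) :: cs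
  end.

(* A construction code: entry number j (0-based, i.e. step j+1) is 0 for an
   elevation and k >= 1 for the pasting of a column of k cells. *)
Definition step (k : nat) (cs : seq column) : seq column :=
  if k == 0%N then elevation cs else pasting k cs.

Definition build (c : seq nat) : seq column := foldl (fun cs k => step k cs) [::] c.

(* Validity: step 1 is an elevation and at step j one has 1 <= k <= j-1. *)
Definition valid_code (c : seq nat) : bool :=
  all (fun j => nth 0%N c j <= j) (iota 0 (size c)).

Definition deco_cells (cs : seq column) (p : cell) : Prop :=
  (0 <= p.1)%R /\
  let: (b, l) := nth (0%R, 0%N) cs `|p.1|%N in (b <= p.2 < b + l%:Z)%R.

(* Phi_4^{-1}: permutations in one-line notation as sequences of values. *)
Definition insert_step (k : nat) (n : nat) (pi : seq nat) : seq nat :=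
  if k == 0%N then rcons pi n
  else take (size pi - k) pi ++ n :: drop (size pi - k) pi.

Fixpoint Phi4inv_aux (pi : seq nat) (j : nat) (c : seq nat) : seq nat :=
  match c with
  | [::] => pi
  | k :: c' => Phi4inv_aux (insert_step k j pi) j.+1 c'
  end.

Definition Phi4inv (c : seq nat) : seq nat := Phi4inv_aux [::] 1 c.

Definition Phi4 (n : nat) (pi : seq nat) : seq column :=
  match [pick c : n.-tuple 'I_n | valid_code (map val c) && (Phi4inv (map val c) == pi)] with
  | Some c => build (map val c)
  | None => [::]
  end.

Definition avoids321 (pi : seq nat) : Prop :=
  ~ exists i j k, [/\ (i < j < k)%N, (k < size pi)%N &
                     (nth 0 pi k < nth 0 pi j < nth 0 pi i)%N].

Definition is_perm (n : nat) (pi : seq nat) : bool := perm_eq pi (iota 1 n).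

(* lattice paths: true = East step (1,0), false = North step (0,1) *)
Definition lstep (o : cell) (b : bool) : cell :=
  if b then (o.1 + 1, o.2)%R else (o.1, o.2 + 1)%R.

Fixpoint pverts (o : cell) (p : seq bool) : seq cell :=
  o :: match p with [::] => [::] | b :: p' => pverts (lstep o b) p' end.

Definition pend (o : cell) (p : seq bool) : cell := last o (pverts o p).

(* height of the East step of the path crossing the vertical strip [i,i+1] *)
Fixpoint eheight (o : cell) (p : seq bool) (i : int) : option int :=
  match p with
  | [::] => None
  | b :: p' => if b && (o.1 == i) then Some o.2 else eheight (lstep o b) p' i
  end.

Definition between (o : cell) (U L : seq bool) (p : cell) : Prop :=
  exists hU hL, [/\ eheight o U p.1 = Some hU, eheight o L p.1 = Some hL &
                   (Num.min hU hL <= p.2 < Num.max hU hL)%R].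

Definition parallelogram (P : cell -> Prop) : Prop :=
  exists (o : cell) (U L : seq bool),
    [/\ pend o U = pend o L,
        (forall v, v \in pverts o U -> v \in pverts o L -> v = o \/ v = pend o U) &
        (forall p, P p <-> between o U L p)].

From mathcomp Require Import all_boot all_order all_algebra zify.
Import Order.TTheory GRing.Theory Num.Theory.
Set Implicit Arguments. Unset Strict Implicit. Unset Printing Implicit Defensive.

(* Reading the construction backwards, an elevation at step j appends j to the
   permutation and the pasting of a column of length k inserts j with exactly k
   entries after it.  As long as the column tops weakly increase from left to
   right, the last ascending run of the permutation is exactly as long as the
   leftmost column.  So a pasting keeps the tops increasing iff k is at most
   that length, i.e. iff the new maximum lands inside the last ascending run,
   and this is precisely when no 321 pattern is created (otherwise the new
   maximum followed by the descent before that run is one); both failures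
   persist, since later steps only add columns on the left and only insert
   larger values.  Geometrically, a deco polyomino has weakly increasing
   column bottoms, consecutive columns overlapping, and it is a parallelogram
   polyomino iff its column tops weakly increase too: the two boundary paths
   are then the staircases through the bottoms and through the tops. *)

(** * Inserting a new maximum *)

Definition insert_at (p x : nat) (s : seq nat) : seq nat := take p s ++ x :: drop p s.

Section InsertAt.

Variables (p x : nat) (s : seq nat).
Hypothesis p_le : p <= size s.

Lemma size_insert_at : size (insert_at p x s) = (size s).+1.
Proof. by rewrite size_cat /= size_take size_drop; case: ltnP; lia. Qed.

Lemma nth_insert_at m :
  nth 0 (insert_at p x s) m = if m == p then x else nth 0 s (m - (p < m)).
Proof.
rewrite nth_cat size_take; have -> : (if p < size s then p else size s) = p.
  by case: ltnP; lia.
case: ltngtP => [m_lt|p_lt|->]; last by rewrite subnn.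
- by rewrite nth_take // subn0.
- rewrite (_ : m - p = (m.-1 - p).+1) /= ?nth_drop; last lia.
  by congr nth; lia.
Qed.

Lemma drop_insert_at : drop p.+1 (insert_at p x s) = drop p s.
Proof.
rewrite drop_cat size_take; have -> : (if p < size s then p else size s) = p.
  by case: ltnP; lia.
by rewrite ltnNge leqnSn /= subSnn /= drop0.
Qed.

Lemma insert_at_not_avoids321 : ~ avoids321 s -> ~ avoids321 (insert_at p x s).
Proof.
move=> has321 avoids; apply: has321 => -[i [j [k [/andP[ij jk] ks decr]]]].
have shift m : m + (p <= m) - (p < m + (p <= m)) = m by lia.
apply: avoids; exists (i + (p <= i)), (j + (p <= j)), (k + (p <= k)).
rewrite size_insert_at !nth_insert_at !ifN ?shift; by [split; lia | lia].
Qed.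

Hypothesis x_max : {in s, forall y, y < x}.

Lemma nth_lt_max m : m < size s -> nth 0 s m < x.
Proof. by move=> lt_m; apply/x_max/mem_nth. Qed.

Lemma avoids321_insert_at :
  sorted leq (drop p s) -> avoids321 s -> avoids321 (insert_at p x s).
Proof.
move=> sorted_tail avoids [i [j [k [/andP[ij jk] ks]]]].
rewrite size_insert_at in ks; rewrite !nth_insert_at.
(* Being the largest value, x can only play the role of the 3. *)
have [ip|ip] := eqVneq i p.
  subst i; rewrite !ifN; try lia.
  have := sorted_leq_nth leq_trans leqnn 0 sorted_tail (j - (p < j) - p) (k - (p < k) - p).
  rewrite !inE size_drop !nth_drop.
  have -> : p + (j - (p < j) - p) = j - (p < j) by lia.
  have -> : p + (k - (p < k) - p) = k - (p < k) by lia.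
  move=> /(_ ltac:(lia) ltac:(lia) ltac:(lia)); lia.
have [jp|jp] := eqVneq j p; first by have := @nth_lt_max (i - (p < i)) ltac:(lia); lia.
have [kp|kp] := eqVneq k p.
  have := @nth_lt_max (i - (p < i)) ltac:(lia).
  by have := @nth_lt_max (j - (p < j)) ltac:(lia); lia.
move=> decr; apply: avoids; exists (i - (p < i)), (j - (p < j)), (k - (p < k)).
by split=> //; lia.
Qed.

Lemma insert_at_descent_not_avoids321 a : p <= a -> a.+1 < size s ->
  nth 0 s a.+1 < nth 0 s a -> ~ avoids321 (insert_at p x s).
Proof.
move=> pa a_lt desc; apply; exists p, a.+1, a.+2; split; rewrite ?size_insert_at; try lia.
rewrite !nth_insert_at eqxx !ifN; try lia.
have -> : a.+1 - (p < a.+1) = a by lia.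
have -> : a.+2 - (p < a.+2) = a.+1 by lia.
by have := @nth_lt_max a ltac:(lia); lia.
Qed.

End InsertAt.

Lemma insert_at_rem x s : x \in s -> insert_at (index x s) x (rem x s) = s.
Proof.
move=> sx; have lt_i : index x s < size s by rewrite index_mem.
have size_take_i : size (take (index x s) s) = index x s by rewrite size_take lt_i.
rewrite remE /insert_at take_size_cat // drop_size_cat //.
by rewrite -[RHS](cat_take_drop (index x s)) (drop_nth x lt_i) nth_index.
Qed.

Lemma sorted_rcons_leq t y :
  sorted leq t -> {in t, forall z, z <= y} -> sorted leq (rcons t y).
Proof. by case: t => //= a t sorted_t le_y; rewrite rcons_path sorted_t le_y ?mem_last. Qed.

Definition final_run (s : seq nat) (L : nat) : Prop :=
  [/\ 0 < L, L <= size s, sorted leq (drop (size s - L) s) &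
      L < size s -> nth 0 s (size s - L) < nth 0 s (size s - L).-1].

Section FinalRun.

Variables (s : seq nat) (L k x : nat).
Hypotheses (run : final_run s L) (x_max : {in s, forall y, y < x}).

Lemma final_run_sorted_drop : k <= L -> sorted leq (drop (size s - k) s).
Proof.
case: run => _ L_le sorted_run _ k_le.
have -> : size s - k = L - k + (size s - L) by lia.
by rewrite -drop_drop drop_sorted.
Qed.

Lemma final_run_insert_at :
  k <= L -> final_run (insert_at (size s - k) x s) (if k == 0 then L.+1 else k).
Proof.
case: run => L_gt0 L_le sorted_run desc k_le.
rewrite /final_run size_insert_at ?leq_subr //.
have [-> | k_gt0] := eqVneq k 0.
  rewrite subn0 /insert_at take_size drop_size cats1 subSS.
  have drop_rcons : drop (size s - L) (rcons s x) = rcons (drop (size s - L) s) x.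
    by rewrite -!cats1 drop_cat ifT //; lia.
  split; try lia.
  - rewrite drop_rcons sorted_rcons_leq // => y /mem_drop /x_max; lia.
  - by move=> L_lt; rewrite !nth_rcons !ifT ?desc //; lia.
rewrite -lt0n in k_gt0; rewrite (_ : (size s).+1 - k = (size s - k).+1); last lia.
split; try lia.
- by rewrite drop_insert_at ?leq_subr // final_run_sorted_drop.
- move=> _; rewrite /= !nth_insert_at ?leq_subr // eqxx ifN; last lia.
  by apply/x_max/mem_nth; rewrite ltnSn subn1 /=; lia.
Qed.

Lemma final_run_insert_at_not_avoids321 :
  L < k <= size s -> ~ avoids321 (insert_at (size s - k) x s).
Proof.
case: run => L_gt0 L_le _ desc k_bounds.
apply: (insert_at_descent_not_avoids321 _ x_max (a := (size s - L).-1)); try lia.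
by rewrite prednK ?desc //; lia.
Qed.

End FinalRun.

(** * The construction code and its permutation *)

Lemma insert_stepE k n s : insert_step k n s = insert_at (size s - k) n s.
Proof.
rewrite /insert_step /insert_at; case: eqP => [->|//].
by rewrite subn0 take_size drop_size cats1.
Qed.

Lemma Phi4inv_aux_rcons s j c k :
  Phi4inv_aux s j (rcons c k) = insert_step k (j + size c) (Phi4inv_aux s j c).
Proof. by elim: c s j => [|a c IH] s j /=; rewrite ?addn0 // IH addSnnS. Qed.

Lemma Phi4inv_rcons c k : Phi4inv (rcons c k) = insert_step k (size c).+1 (Phi4inv c).
Proof. exact: Phi4inv_aux_rcons. Qed.

Lemma size_Phi4inv c : size (Phi4inv c) = size c.
Proof.
elim/last_ind: c => // c k IH.
by rewrite Phi4inv_rcons insert_stepE size_insert_at ?leq_subr // IH size_rcons.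
Qed.

Lemma Phi4inv_le c : {in Phi4inv c, forall y, y <= size c}.
Proof.
elim/last_ind: c => // c k IH y.
rewrite Phi4inv_rcons insert_stepE size_rcons mem_cat inE.
by case/or3P=> [/mem_take/IH|/eqP->|/mem_drop/IH]; lia.
Qed.

Lemma valid_code_rcons c k : valid_code (rcons c k) = valid_code c && (k <= size c).
Proof.
rewrite /valid_code size_rcons -addn1 iotaD add0n all_cat /= andbT.
rewrite nth_rcons ltnn eqxx; congr andb.
apply: eq_in_all => j; rewrite mem_iota => /andP[_ lt_j].
by rewrite nth_rcons lt_j.
Qed.

Lemma valid_code_lt c : valid_code c -> {in c, forall k, k < size c}.
Proof.
move=> /allP valid k ck; have lt_i : index k c < size c by rewrite index_mem.
have := valid (index k c); rewrite mem_iota lt_i nth_index // => /(_ isT); lia.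
Qed.

Lemma Phi4inv_onto n pi : is_perm n pi ->
  exists c, [/\ size c = n, valid_code c & Phi4inv c = pi].
Proof.
elim: n pi => [|n IH] pi perm_pi.
  by exists [::]; move: (perm_size perm_pi); case: pi {perm_pi}.
have pi_n : n.+1 \in pi by rewrite (perm_mem perm_pi) mem_iota; lia.
have perm_rem : is_perm n (rem n.+1 pi).
  rewrite /is_perm -(perm_cons n.+1) -(permPl (perm_to_rem pi_n)) (permPl perm_pi).
  have -> : iota 1 n.+1 = rcons (iota 1 n) n.+1 by rewrite -cats1 -[n.+1]addn1 iotaD addnC.
  by rewrite perm_rcons.
have [c [size_c valid_c Phi4inv_c]] := IH _ perm_rem.
have size_pi : size pi = n.+1 by rewrite (perm_size perm_pi) size_iota.
have lt_i : index n.+1 pi <= n by rewrite -ltnS -[X in _ < X]size_pi index_mem.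
exists (rcons c (n - index n.+1 pi)); split.
- by rewrite size_rcons size_c.
- by rewrite valid_code_rcons valid_c size_c leq_subr.
- rewrite Phi4inv_rcons size_c insert_stepE Phi4inv_c size_rem // size_pi.
  by rewrite subKn // insert_at_rem.
Qed.

Lemma Phi4_spec n pi : 0 < n -> is_perm n pi ->
  exists c, [/\ c != [::], valid_code c, Phi4inv c = pi & Phi4 n pi = build c].
Proof.
move=> n_gt0 perm_pi; rewrite /Phi4; case: pickP => [t /andP[valid /eqP <-]|none].
  by exists (map val t); rewrite -size_eq0 size_map size_tuple -lt0n.
have [c [size_c valid pi_c]] := Phi4inv_onto perm_pi.
case: n n_gt0 perm_pi none size_c => // n _ _ none size_c.
have size_t : size (map (@inord n) c) == n.+1 by rewrite size_map size_c.
have val_c : map val (map (@inord n) c) = c.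
  by rewrite -map_comp map_id_in // => k /(valid_code_lt valid); rewrite size_c; apply: inordK.
by have := none (Tuple size_t); rewrite /= val_c valid pi_c eqxx.
Qed.

(** * Column lists and 321-avoidance *)

Local Open Scope ring_scope.

Definition col_top (c : column) : int := c.1 + c.2%:Z.
Definition top_le (c1 c2 : column) : bool := col_top c1 <= col_top c2.
Definition col_link (c1 c2 : column) : bool := (c1.1 <= c2.1) && (c2.1 < col_top c1).
Definition head_len (cs : seq column) : nat := (head (0, 0%N) cs).2.

Definition deco_wf (cs : seq column) : bool :=
  [&& cs != [::], all (fun c : column => (0 < c.2)%N) cs & sorted col_link cs].

Lemma build_rcons c k : build (rcons c k) = step k (build c).
Proof. exact: foldl_rcons. Qed.

Lemma head_len_step k cs : cs != [::] ->
  head_len (step k cs) = if k == 0%N then (head_len cs).+1 else k.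
Proof. by case: cs => [|[b l] cs] //= _; rewrite /step; case: eqP. Qed.

Lemma sorted_top_step k cs : cs != [::] ->
  sorted top_le (step k cs) = (k <= head_len cs)%N && sorted top_le cs.
Proof.
case: cs => [|[b l] cs] //= _; rewrite /step; case: eqP => [->|_] /=.
  have top_elev : col_top (b - 1, l.+1) = col_top (b, l) by rewrite /col_top /=; lia.
  by case: cs => //= c cs; rewrite /top_le top_elev.
by rewrite /top_le /col_top /= lerD2l lez_nat.
Qed.

Lemma deco_wf_step k cs : deco_wf cs -> deco_wf (step k cs).
Proof.
case: cs => [|[b l] cs] // /and3P[_ /andP[l_gt0 pos] link].
rewrite /deco_wf /step; case: (posnP k) => [_|k_gt0] /=.
  apply/andP; split=> //; case: cs link {pos} => //= c cs /andP[/andP[b_le c_lt] ->].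
  by rewrite /col_link /col_top /= in c_lt b_le *; apply/andP; split; lia.
apply/and3P; split; [exact/and3P | | exact: link].
by rewrite /col_link /col_top /= lexx; lia.
Qed.

Lemma deco_wf_build c : c != [::] -> deco_wf (build c).
Proof.
elim/last_ind: c => // c k IH _; rewrite build_rcons.
have [->|c0] := eqVneq c [::]; last exact/deco_wf_step/IH.
by rewrite /step; case: (posnP k) => [_|k_gt0]; rewrite /deco_wf //= k_gt0.
Qed.

Lemma Phi4inv_final_run c : valid_code c -> c != [::] ->
  if sorted top_le (build c)
  then final_run (Phi4inv c) (head_len (build c)) /\ avoids321 (Phi4inv c)
  else ~ avoids321 (Phi4inv c).
Proof.
elim/last_ind: c => // c k IH; rewrite valid_code_rcons => /andP[valid_c k_le] _.
have [c0|c0] := eqVneq c [::].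
  subst c; move: k_le; rewrite leqn0 => /eqP ->.
  split; first by split.
  by case=> i [j [l [/andP[ij jl] l_lt _]]]; move: l_lt; rewrite /Phi4inv /=; lia.
have build0 : build c != [::] by have /andP[] := deco_wf_build c0.
rewrite build_rcons sorted_top_step // head_len_step // Phi4inv_rcons insert_stepE.
rewrite -(size_Phi4inv c) in k_le *.
have x_max : {in Phi4inv c, forall y, (y < (size (Phi4inv c)).+1)%N}.
  by move=> y /Phi4inv_le; rewrite size_Phi4inv.
case: (sorted top_le (build c)) (IH valid_c c0) => [[run avoids]|has321]; last first.
  by rewrite andbF; apply: insert_at_not_avoids321; rewrite ?leq_subr.
rewrite andbT; case: leqP => [k_le_L|L_lt_k].
  split; first exact: final_run_insert_at.
  by apply: avoids321_insert_at; rewrite ?leq_subr // (final_run_sorted_drop run).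
by apply: (final_run_insert_at_not_avoids321 run x_max); rewrite L_lt_k.
Qed.

Lemma avoids321_Phi4inv c : valid_code c -> c != [::] ->
  avoids321 (Phi4inv c) <-> sorted top_le (build c).
Proof.
move=> valid_c c0; have := Phi4inv_final_run valid_c c0.
by case: (sorted _ _) => [[]|has321]; split.
Qed.

(** * Lattice paths *)

Lemma pverts_cons o b p : pverts o (b :: p) = o :: pverts (lstep o b) p.
Proof. by []. Qed.

Lemma pend_cons o b p : pend o (b :: p) = pend (lstep o b) p.
Proof. by rewrite /pend /=; case: p. Qed.

Lemma pend_cat o p q : pend o (p ++ q) = pend (pend o p) q.
Proof. by elim: p o => [|b p IH] o //=; rewrite !pend_cons IH. Qed.

Lemma pend_nseq o d : pend o (nseq d false) = (o.1, o.2 + d%:Z).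
Proof.
elim: d o => [|d IH] [x y] /=; first by rewrite addr0.
by rewrite pend_cons IH /=; congr pair; lia.
Qed.

Lemma mem_pend o p : pend o p \in pverts o p.
Proof. by rewrite /pend; case: p => [|b p] /=; [rewrite inE | exact: mem_last]. Qed.

Lemma mem_pverts_cat v o p q : v \in pverts o (p ++ q) ->
  v \in pverts o p \/ v \in pverts (pend o p) q.
Proof.
elim: p o => [|b p IH] o /=; first by right.
rewrite inE => /orP[/eqP->|/IH[v_p|v_q]]; first by left; rewrite inE eqxx.
- by left; rewrite inE v_p orbT.
- by right; rewrite pend_cons.
Qed.

Lemma mem_pverts_nseq v o d : v \in pverts o (nseq d false) ->
  v.1 = o.1 /\ o.2 <= v.2 <= o.2 + d%:Z.
Proof.
elim: d o => [|d IH] [x y] /=; first by rewrite inE => /eqP -> /=; split => //; lia.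
rewrite inE => /orP[/eqP->|/IH] /=; [split => //; lia | case=> -> /=; lia].
Qed.

Lemma pverts_ge v o p : v \in pverts o p -> o.1 <= v.1 /\ o.2 <= v.2.
Proof.
elim: p o => [|b p IH] [x y] /=; first by rewrite inE => /eqP -> /=; lia.
rewrite inE => /orP[/eqP->|/IH] /=; first lia.
by case: b => /=; lia.
Qed.

Lemma eheight_cat o p q i : eheight o (p ++ q) i =
  if eheight o p i is Some h then Some h else eheight (pend o p) q i.
Proof. by elim: p o => [|b p IH] o //=; case: ifP => _ //; rewrite IH pend_cons. Qed.

Lemma eheight_nseq o d i : eheight o (nseq d false) i = None.
Proof. by elim: d o => [|d IH] o //=. Qed.

Lemma eheight_ge o p i h : eheight o p i = Some h -> o.1 <= i /\ o.2 <= h.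
Proof.
elim: p o => [|b p IH] [x y] //=; case: b => /=; last by move=> /IH /=; lia.
by case: eqP => [-> [<-]|_ /IH /=]; lia.
Qed.

Lemma eheight_lt_pend o p i h : eheight o p i = Some h -> i < (pend o p).1.
Proof.
elim: p o => [|b p IH] [x y] //=; rewrite pend_cons; case: b => /=; last exact: IH.
case: eqP => [<- _|_ /IH //].
by have [/= + _] := pverts_ge (mem_pend (x + 1, y) p); lia.
Qed.

Lemma eheight_mono o p i i' h h' : i < i' ->
  eheight o p i = Some h -> eheight o p i' = Some h' -> h <= h'.
Proof.
elim: p o => [|b p IH] [x y] //=; case: b => /=; last exact: IH.
case: eqP => [-> lt_i [<-]|_ lt_i]; first by rewrite ifN; [move/eheight_ge => /=|]; lia.
by case: eqP => [-> /eheight_ge /= + [<-]|_]; [lia | exact: IH].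
Qed.

(** * Boundary paths of a deco polyomino *)

Fixpoint lower_path (cs : seq column) : seq bool :=
  match cs with
  | [::] => [::]
  | c :: cs' =>
      let rise := if cs' is c' :: _ then `|c'.1 - c.1|%N else c.2 in
      true :: nseq rise false ++ lower_path cs'
  end.

Fixpoint upper_path (s : int) (cs : seq column) : seq bool :=
  match cs with
  | [::] => [::]
  | c :: cs' => nseq `|col_top c - s|%N false ++ true :: upper_path (col_top c) cs'
  end.

Lemma lower_path1 c : lower_path [:: c] = true :: nseq c.2 false.
Proof. by rewrite /= cats0. Qed.

Lemma lower_path_cons2 c c' cs :
  lower_path [:: c, c' & cs] = true :: nseq `|c'.1 - c.1|%N false ++ lower_path (c' :: cs).
Proof. by []. Qed.

Lemma upper_path_cons s c cs :
  upper_path s (c :: cs) = nseq `|col_top c - s|%N false ++ true :: upper_path (col_top c) cs.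
Proof. by []. Qed.

Lemma pend_lower_path x0 c cs : sorted col_link (c :: cs) ->
  pend (x0, c.1) (lower_path (c :: cs)) = (x0 + (size cs).+1%:Z, col_top (last c cs)).
Proof.
elim: cs x0 c => [|c' cs IH] x0 c /=.
  by move=> _; rewrite pend_cons cats0 pend_nseq /= /col_top; congr pair; lia.
move=> /andP[/andP[le_b _] link]; rewrite pend_cons pend_cat pend_nseq /=.
have -> : c.1 + `|c'.1 - c.1|%N%:Z = c'.1 by lia.
by rewrite IH //; congr pair; lia.
Qed.

Lemma eheight_lower_path x0 c cs i : sorted col_link (c :: cs) -> (i <= size cs)%N ->
  eheight (x0, c.1) (lower_path (c :: cs)) (x0 + i%:Z) = Some (nth c (c :: cs) i).1.
Proof.
elim: cs x0 c i => [|c' cs IH] x0 c i /=.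
  by rewrite leqn0 => _ /eqP -> /=; rewrite addr0 eqxx.
move=> /andP[/andP[le_b _] link]; case: i => [|i] le_i /=; first by rewrite addr0 eqxx.
rewrite ifN; last by apply/eqP; lia.
rewrite eheight_cat eheight_nseq pend_nseq /=.
have -> : c.1 + `|c'.1 - c.1|%N%:Z = c'.1 by lia.
have -> : x0 + i.+1%:Z = x0 + 1 + i%:Z by lia.
by have := IH (x0 + 1) c' i link le_i; rewrite /= => ->; rewrite (set_nth_default c).
Qed.

Lemma pend_upper_path x0 s c cs : sorted top_le (c :: cs) -> s <= col_top c ->
  pend (x0, s) (upper_path s (c :: cs)) = (x0 + (size cs).+1%:Z, col_top (last c cs)).
Proof.
elim: cs x0 s c => [|c' cs IH] x0 s c /=.
  by move=> _ le_s; rewrite pend_cat pend_nseq pend_cons /=; congr pair; lia.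
move=> /andP[top_c tops] le_s; rewrite pend_cat pend_nseq pend_cons /=.
have -> : s + `|col_top c - s|%N%:Z = col_top c by lia.
by rewrite IH //; congr pair; lia.
Qed.

Lemma eheight_upper_path x0 s c cs i :
  sorted top_le (c :: cs) -> s <= col_top c -> (i <= size cs)%N ->
  eheight (x0, s) (upper_path s (c :: cs)) (x0 + i%:Z) = Some (col_top (nth c (c :: cs) i)).
Proof.
elim: cs x0 s c i => [|c' cs IH] x0 s c i /=.
  move=> _ le_s; rewrite leqn0 => /eqP ->.
  by rewrite eheight_cat eheight_nseq pend_nseq /= addr0 eqxx; congr Some; lia.
move=> /andP[top_c tops] le_s le_i; rewrite eheight_cat eheight_nseq pend_nseq /=.
have -> : s + `|col_top c - s|%N%:Z = col_top c by lia.
case: i le_i => [|i] le_i /=; first by rewrite addr0 eqxx.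
rewrite ifN; last by apply/eqP; lia.
have -> : x0 + i.+1%:Z = x0 + 1 + i%:Z by lia.
have := IH (x0 + 1) (col_top c) c' i tops top_c le_i.
by rewrite /= => ->; rewrite (set_nth_default c).
Qed.

(* The starting height [s] of the upper path is generalised for the induction. *)
Lemma pverts_lower_upper x0 s c cs v :
  sorted col_link (c :: cs) -> sorted top_le (c :: cs) ->
  all (fun c : column => (0 < c.2)%N) (c :: cs) -> c.1 <= s <= col_top c ->
  v \in pverts (x0, c.1) (lower_path (c :: cs)) ->
  v \in pverts (x0, s) (upper_path s (c :: cs)) ->
  v = (x0 + (size cs).+1%:Z, col_top (last c cs)) \/ (s = c.1 /\ v = (x0, c.1)).
Proof.
case: v => vx vy; elim: cs x0 s c => [|c' cs IH] x0 s c.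
  move=> _ _ /andP[len_c _] s_bounds.
  rewrite lower_path1 upper_path_cons pverts_cons inE => /orP[/eqP [-> ->]|].
    move=> /mem_pverts_cat [/mem_pverts_nseq /= [_ vy_bounds]|].
      by right; split=> //; lia.
    rewrite pend_nseq pverts_cons inE /= => /orP[/eqP [vy_top]|].
      by move: vy_top s_bounds len_c; rewrite /col_top; lia.
    by rewrite mem_seq1 => /eqP [? _]; lia.
  move=> /mem_pverts_nseq /= [-> vy_bounds].
  move=> /mem_pverts_cat [/mem_pverts_nseq /= [? _]|]; first lia.
  rewrite pend_nseq pverts_cons inE /= => /orP[/eqP [? _]|]; first lia.
  rewrite mem_seq1 => /eqP [vy_top].
  by left; congr pair; move: vy_bounds vy_top s_bounds; rewrite /col_top; lia.
move=> /andP[/andP[le_b lt_top] link] /andP[top_c tops] /andP[len_c lens] s_bounds.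
rewrite lower_path_cons2 pverts_cons inE => /orP[/eqP [-> ->]|].
  move=> /mem_pverts_cat [/mem_pverts_nseq /= [_ vy_bounds]|].
    by right; split=> //; lia.
  rewrite pend_nseq pverts_cons inE /= => /orP[/eqP [vy_top]|/pverts_ge /=]; last lia.
  by move: vy_top s_bounds len_c; rewrite /col_top; lia.
move=> /mem_pverts_cat [/mem_pverts_nseq /= [-> vy_bounds]|].
  move=> /mem_pverts_cat [/mem_pverts_nseq /= [? _]|]; first lia.
  rewrite pend_nseq pverts_cons inE /= => /orP[/eqP [? _]|/pverts_ge /= [_ vy_ge]]; first lia.
  by rewrite /top_le /col_top in top_c lt_top vy_bounds vy_ge *; lia.
have -> : pend (lstep (x0, c.1) true) (nseq `|c'.1 - c.1|%N false) = (x0 + 1, c'.1).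
  by rewrite pend_nseq /=; congr pair; lia.
move=> on_lower /mem_pverts_cat [/mem_pverts_nseq [/= vx_eq _]|].
  by have := pverts_ge on_lower; rewrite /=; lia.
have -> : pend (x0, s) (nseq `|col_top c - s|%N false) = (x0, col_top c).
  by rewrite pend_nseq /=; congr pair; lia.
rewrite pverts_cons inE => /orP[/eqP [vx_eq _]|on_upper].
  by have := pverts_ge on_lower; rewrite /=; lia.
have s'_bounds : c'.1 <= col_top c <= col_top c' by apply/andP; split; [lia | exact: top_c].
case: (IH (x0 + 1) (col_top c) c' link tops lens s'_bounds on_lower on_upper) => [->|[? _]].
  by left; congr pair; rewrite /=; lia.
lia.
Qed.

Lemma deco_cells_between c cs p :
  sorted col_link (c :: cs) -> sorted top_le (c :: cs) ->
  all (fun c : column => (0 < c.2)%N) (c :: cs) ->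
  deco_cells (c :: cs) p <->
  between (0, c.1) (upper_path c.1 (c :: cs)) (lower_path (c :: cs)) p.
Proof.
move=> link tops lens; have le_top : c.1 <= col_top c.
  by move: lens => /andP[len_c _]; rewrite /col_top; lia.
have col_pos i : (i <= size cs)%N -> (0 < (nth c (c :: cs) i).2)%N.
  by move=> le_i; apply: (allP lens); apply: mem_nth.
case: p => x y; split.
  rewrite /deco_cells /= => -[x_ge0]; case: (ltnP `|x|%N (size cs).+1) => lt_x; last first.
    by rewrite nth_default //; lia.
  have -> : x = 0 + `|x|%N%:Z by lia.
  rewrite (set_nth_default c) // => y_in.
  exists (col_top (nth c (c :: cs) `|x|)), (nth c (c :: cs) `|x|).1; split.
  - by rewrite eheight_upper_path.
  - by rewrite eheight_lower_path.
  - by move: y_in (col_pos _ lt_x); case: (nth c _ _) => b l; rewrite /col_top /=; lia.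
move=> [hU [hL [eU eL y_in]]]; rewrite [(x, y).1]/= in eU eL; rewrite [(x, y).2]/= in y_in.
have [/= x_ge0 _] := eheight_ge eL.
have := eheight_lt_pend eL; rewrite pend_lower_path //= => lt_x.
have x_nat : x = 0 + `|x|%N%:Z by lia.
have le_x : (`|x|%N <= size cs)%N by lia.
rewrite x_nat eheight_lower_path // in eL; rewrite x_nat eheight_upper_path // in eU.
case: eU eL y_in => <- [<-] y_in; split=> /=; first lia.
rewrite (set_nth_default c) //.
by move: y_in (col_pos _ le_x); case: (nth c _ _) => b l; rewrite /col_top /=; lia.
Qed.

Lemma sorted_top_parallelogram cs :
  deco_wf cs -> sorted top_le cs -> parallelogram (deco_cells cs).
Proof.
case: cs => [//|c cs] /and3P[_ lens link] tops.
have le_top : c.1 <= col_top c by move: lens => /andP[len_c _]; rewrite /col_top; lia.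
exists (0, c.1), (upper_path c.1 (c :: cs)), (lower_path (c :: cs)); split.
- by rewrite pend_upper_path ?pend_lower_path.
- move=> v on_upper on_lower; rewrite pend_upper_path //.
  have s_bounds : c.1 <= c.1 <= col_top c by rewrite lexx.
  by case: (pverts_lower_upper link tops lens s_bounds on_lower on_upper) => [|[_]]; auto.
- by move=> p; apply: deco_cells_between.
Qed.

Lemma deco_cells_nat cs (i : nat) y :
  deco_cells cs (i%:Z, y) <-> let: (b, l) := nth (0, 0%N) cs i in b <= y < b + l%:Z.
Proof. by rewrite /deco_cells /=; split => [[]|]. Qed.

(* The top cell of column i is enclosed, so it lies below the higher east step
   over i; the cell just below that step is enclosed, so it belongs to column i. *)
Lemma col_top_between cs o U L i :
  all (fun c : column => (0 < c.2)%N) cs -> (forall p, deco_cells cs p <-> between o U L p) ->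
  (i < size cs)%N -> exists hU hL, [/\ eheight o U i%:Z = Some hU,
    eheight o L i%:Z = Some hL & col_top (nth (0, 0%N) cs i) = Num.max hU hL].
Proof.
move=> lens cellsE lt_i; have := allP lens _ (mem_nth (0, 0%N) lt_i).
case nth_i: (nth _ cs i) => [b l] /= len_i.
have [hU [hL [eU eL /= y_in]]] : between o U L (i%:Z, b + l%:Z - 1).
  by apply/cellsE/deco_cells_nat; rewrite nth_i; lia.
exists hU, hL; split=> //.
have : between o U L (i%:Z, Num.max hU hL - 1) by exists hU, hL; split=> //=; lia.
by move=> /cellsE /deco_cells_nat; rewrite nth_i /col_top /=; lia.
Qed.

Lemma parallelogram_sorted_top cs :
  deco_wf cs -> parallelogram (deco_cells cs) -> sorted top_le cs.
Proof.
move=> /and3P[_ lens _] [o [U [L [_ _ cellsE]]]].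
apply/(sortedP (0, 0%N)) => i lt_i; rewrite /top_le.
have [hU [hL [eU eL ->]]] := col_top_between lens cellsE (ltnW lt_i).
have [hU' [hL' [eU' eL' ->]]] := col_top_between lens cellsE lt_i.
have lt_ii : i%:Z < i.+1%:Z by lia.
by have := eheight_mono lt_ii eU eU'; have := eheight_mono lt_ii eL eL'; lia.
Qed.

Lemma parallelogram_deco_cellsP cs :
  deco_wf cs -> parallelogram (deco_cells cs) <-> sorted top_le cs.
Proof.
by move=> wf_cs; split; [apply: parallelogram_sorted_top | apply: sorted_top_parallelogram].
Qed.

Local Close Scope ring_scope.

Theorem mainTheorem3 (n : nat) (pi : seq nat) :
  (1 <= n)%N -> is_perm n pi ->
  (avoids321 pi <-> parallelogram (deco_cells (Phi4 n pi))).
Proof.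
move=> n_gt0 perm_pi; have [c [c0 valid_c <- ->]] := Phi4_spec n_gt0 perm_pi.
rewrite (parallelogram_deco_cellsP (deco_wf_build c0)).
exact: avoids321_Phi4inv.
Qed.
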